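(* Let $(q(\ell))_{\ell\in\mathbb{Z}}\subset\mathbb{C}$ and $(p(\ell,z))_{(\ell,z)\in\mathbb{Z}^2}\subset\mathbb{C}$ satisfy $q(\ell)=0$ for all $\ell<0$ and $p(\ell,z)=0$ for all $\ell\in\mathbb{Z}$, $z<0$. Let $r$, $\mathbb{L}$, $\ddot r$, $\ddot p_+$, $q|_{\mathbb{L}}$ and $\beta\{\ddot p_+\}$ be as in the context. Then $$q|_{\mathbb{L}}(\ell)=\sum_{z\in\mathbb{Z}}\ddot r(\ell-z)\,\beta\{\ddot p_+\}(\ell,z)\qquad(\ell\in\mathbb{Z}).$$ In particular, $q|_{\mathbb{L}}(\ell)=q(\ell)$ for all $\ell\in\mathbb{Z}$ whenever $q(\ell)=0$ for all $\ell\in\mathbb{Z}\setminus\mathbb{L}$.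
   Context: Define $r(\ell):=\sum_{z\in\mathbb{Z}}q(\ell-z)p(\ell,z)$ for $\ell\in\mathbb{Z}$ (a finite sum). Let $L_0:=\sup\{L\in\mathbb{N}_0: p(\ell,0)\neq0 \text{ for all } 0\le\ell<L\}\in\mathbb{N}_0\cup\{\infty\}$; it is assumed that $L_0\ge1$. Put $\mathbb{L}:=\{\ell\in\mathbb{Z}:0\le\ell<L_0\}$. Define $\ddot r(\ell):=\frac{r(\ell)}{p(\ell,0)}\mathbf 1_{\mathbb{L}}(\ell)$, $\ddot p_+(\ell,z):=\big(\delta_{z,0}-\frac{p(\ell,z)}{p(\ell,0)}\big)\mathbf 1_{\mathbb{L}}(\ell)$ (with $\delta_{z,0}=1$ if $z=0$ and $0$ otherwise; both quantities are $0$ for $\ell\notin\mathbb{L}$), and $q|_{\mathbb{L}}(\ell):=q(\ell)\mathbf 1_{\mathbb{L}}(\ell)$. Convolution powers of the double sequence $\ddot p_+$: $\ddot p_+^{*0}(\ell,z):=\delta_{z,0}$ and $\ddot p_+^{*j}(\ell,z):=\sum_{z_1\in\mathbb{Z}}\ddot p_+(\ell,z_1)\,\ddot p_+^{*(j-1)}(\ell-z_1,z-z_1)$ for $j\ge1$ (finite sums). Set $\beta\{\ddot p_+\}(\ell,z):=\sum_{j=0}^{\lfloor z\rfloor}\ddot p_+^{*j}(\ell,z)$ for $(\ell,z)\in\mathbb{Z}^2$ (empty sums are $0$, so this is $0$ for $z<0$). *)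

From HB Require Import structures.
From mathcomp Require Import all_boot all_order all_algebra.
From mathcomp Require Import complex.
From mathcomp Require Import boolp classical_sets fsbigop reals.
Set Implicit Arguments. Unset Strict Implicit. Unset Printing Implicit Defensive.
Import Order.TTheory GRing.Theory Num.Theory.
Local Open Scope ring_scope.
Local Open Scope classical_set_scope.
Local Open Scope complex_scope.

Section Defs.
Variable R : realType.
Notation C := R[i].

Definition zsum (f : int -> C) : C := \sum_(z \in [set: int]) f z.

Definition rr (q : int -> C) (p : int -> int -> C) (l : int) : C :=
  zsum (fun z => q (l - z) * p l z).

(* l \in LL  <=>  0 <= l < L_0, where
   L_0 = sup {L : nat | p(k,0) <> 0 for all 0 <= k < L} *)
Definition inLL (p : int -> int -> C) (l : int) : Prop :=
  exists L : nat, (forall k : nat, (k < L)%N -> p k%:Z 0 != 0)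
                  /\ (0 <= l) /\ (l < L%:Z).

Definition indLL (p : int -> int -> C) (l : int) : C :=
  if `[< inLL p l >] then 1 else 0.

Definition rdd (q : int -> C) (p : int -> int -> C) (l : int) : C :=
  (rr q p l / p l 0) * indLL p l.

Definition pplus (p : int -> int -> C) (l z : int) : C :=
  ((z == 0)%:R - p l z / p l 0) * indLL p l.

Definition qL (q : int -> C) (p : int -> int -> C) (l : int) : C :=
  q l * indLL p l.

Fixpoint convpow (pp : int -> int -> C) (j : nat) (l z : int) : C :=
  match j with
  | O => (z == 0)%:R
  | j'.+1 => zsum (fun z1 => pp l z1 * convpow pp j' (l - z1) (z - z1))
  end.

Definition beta (pp : int -> int -> C) (l z : int) : C :=
  if (0 <= z) then \sum_(j < (absz z).+1) convpow pp j l z else 0.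

End Defs.

From HB Require Import structures.
From mathcomp Require Import all_boot all_order all_algebra.
From mathcomp Require Import complex.
From mathcomp Require Import boolp classical_sets fsbigop reals.
From mathcomp Require Import zify ring.
Import Order.TTheory GRing.Theory Num.Theory.
Local Open Scope ring_scope.
Local Open Scope complex_scope.

(* Both q|_L and l |-> sum_z rdd(l - z) beta(l, z) vanish for l < 0 and solve the
   same triangular recursion X(l) = rdd(l) + sum_(z >= 1) pplus(l, z) X(l - z).
   For q|_L this is the definition of r solved for q(l), which is possible on L
   because p(l, 0) != 0 there.  For the convolution it follows from the renewal
   identity beta(l, z) = [z = 0] + sum_z1 pplus(l, z1) beta(l - z1, z - z1) of the
   Neumann series beta of pplus.  Strong induction on l identifies the two. *)

Section Convolution.
Set Implicit Arguments.
Variable R : realType.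
Notation C := R[i].

Lemma zsum_window (f : int -> C) (a : int) (n : nat) :
  (forall z, ~~ (a <= z < a + n%:Z) -> f z = 0) ->
  zsum f = \sum_(i < n) f (a + i%:Z).
Proof.
move=> f_out; rewrite /zsum fsbig_supp.
rewrite (fsbig_fwiden [seq a + i%:Z | i <- iota 0 n]).
- by rewrite big_map -(big_mkord xpredT (fun i => f (a + i%:Z))) /index_iota subn0.
- move=> z [_ /= fz_neq0].
  have /andP[a_le_z z_lt] : a <= z < a + n%:Z by apply: contra_notT fz_neq0 => /f_out.
  apply/mapP; exists (absz (z - a)); first by rewrite mem_iota add0n; lia.
  lia.
- by rewrite map_inj_uniq ?iota_uniq // => x y /addrI /eqP; rewrite eqz_nat => /eqP.
- by move=> z [_ /= fz0]; apply/eqP; apply: contra_notT fz0 => /eqP.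
Qed.

Variable pp : int -> int -> C.
Hypothesis pp_eq0 : forall l z : int, z <= 0 -> pp l z = 0.

Notation cp := (convpow pp).

Lemma convpow_eq0 (j : nat) (l z : int) : z < j%:Z -> cp j l z = 0.
Proof.
elim: j l z => [|j IH] l z /= z_lt; first by rewrite lt_eqF.
rewrite /zsum fsbig1 // => z1 _.
have [z1_le0|z1_gt0] := lerP z1 0; first by rewrite pp_eq0 ?mul0r.
by rewrite IH ?mulr0 //; lia.
Qed.

Lemma convpowS_window (j : nat) (l z : int) (n : nat) : z < n%:Z ->
  cp j.+1 l z = \sum_(i < n) pp l i%:Z * cp j (l - i%:Z) (z - i%:Z).
Proof.
move=> z_lt /=; rewrite (zsum_window _ 0 n); last first.
  move=> z1 z1_out; have [z1_le0|z1_gt0] := lerP z1 0; first by rewrite pp_eq0 ?mul0r.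
  by rewrite convpow_eq0 ?mulr0 //; lia.
by apply: eq_bigr => i _; rewrite add0r.
Qed.

Lemma beta_eq0 (l z : int) : z < 0 -> beta pp l z = 0.
Proof. by move=> z_lt0; rewrite /beta lt_geF. Qed.

Lemma beta_window (l z : int) (n : nat) : z < n%:Z -> beta pp l z = \sum_(j < n) cp j l z.
Proof.
move=> z_lt; rewrite /beta; case: ifPn => z_ge0; last first.
  by rewrite big1 // => j _; rewrite convpow_eq0 //; lia.
rewrite (big_ord_widen n (fun j => cp j l z)); last by lia.
rewrite big_mkcond; apply: eq_bigr => j _; case: ifPn => // j_gt.
by rewrite convpow_eq0 //; lia.
Qed.

Lemma beta_rec (l z : int) (n : nat) : z < n%:Z ->
  beta pp l z = (z == 0)%:R + \sum_(i < n) pp l i%:Z * beta pp (l - i%:Z) (z - i%:Z).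
Proof.
move=> z_lt; rewrite (beta_window _ _ n.+1) ?big_ord_recl; last by lia.
congr (_ + _); under eq_bigr => j _ do rewrite (convpowS_window j l z n z_lt).
rewrite exchange_big; apply: eq_bigr => i _.
by rewrite (beta_window _ _ n) ?mulr_sumr //; lia.
Qed.

Definition beta_conv (a : int -> C) (l : int) : C :=
  zsum (fun z => a (l - z) * beta pp l z).

Variable a : int -> C.
Hypothesis a_eq0 : forall l : int, l < 0 -> a l = 0.

Lemma beta_conv_window (l : int) (i n : nat) : l + i%:Z < n%:Z ->
  beta_conv a l = \sum_(z < n) a (l + i%:Z - z%:Z) * beta pp l (z%:Z - i%:Z).
Proof.
move=> l_lt; rewrite /beta_conv (zsum_window _ (- i%:Z) n); last first.
  move=> z z_out; have [z_lt0|z_ge0] := ltP z 0; first by rewrite beta_eq0 ?mulr0.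
  by rewrite a_eq0 ?mul0r //; lia.
by apply: eq_bigr => z _; rewrite [- i%:Z + _]addrC opprB addrA.
Qed.

Lemma beta_conv_eq0 (l : int) : l < 0 -> beta_conv a l = 0.
Proof. by move=> l_lt0; rewrite (beta_conv_window l 0 0) ?big_ord0 ?addr0. Qed.

Lemma beta_conv_rec (m : nat) :
  beta_conv a m%:Z = a m%:Z + \sum_(i < m.+1) pp m%:Z i%:Z * beta_conv a (m%:Z - i%:Z).
Proof.
rewrite (beta_conv_window _ 0 m.+1) ?addr0; last by lia.
rewrite (eq_bigr (fun z : 'I_m.+1 => a (m%:Z - z%:Z) * (z%:Z == 0)%:R +
    \sum_(i < m.+1) pp m%:Z i%:Z * (a (m%:Z - z%:Z) * beta pp (m%:Z - i%:Z) (z%:Z - i%:Z)))).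
  rewrite big_split /= exchange_big; congr (_ + _).
    by rewrite big_ord_recl subr0 mulr1 big1 ?addr0 // => z _; rewrite mulr0.
  apply: eq_bigr => i _; rewrite (beta_conv_window _ i m.+1); last by lia.
  by rewrite mulr_sumr; under [RHS]eq_bigr do rewrite subrK.
move=> z _; rewrite subr0 (beta_rec _ _ m.+1); last by have := ltn_ord z; lia.
by rewrite mulrDr mulr_sumr; under eq_bigr do rewrite mulrCA.
Qed.

Lemma beta_conv_unique (X : int -> C) :
  (forall l : int, l < 0 -> X l = 0) ->
  (forall m : nat, X m%:Z = a m%:Z + \sum_(i < m.+1) pp m%:Z i%:Z * X (m%:Z - i%:Z)) ->
  X =1 beta_conv a.
Proof.
move=> X_eq0 X_rec [m|n]; last by rewrite X_eq0 ?beta_conv_eq0.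
elim/ltn_ind: m => m IH; rewrite X_rec beta_conv_rec; congr (_ + _).
apply: eq_bigr => i _; have [->|i_gt0] := posnP i; first by rewrite pp_eq0 ?mul0r.
have i_le : (i <= m)%N by rewrite -ltnS.
by rewrite subzn // IH //; lia.
Qed.

End Convolution.

Section Inversion.
Set Implicit Arguments.
Variable R : realType.
Notation C := R[i].
Variables (q : int -> C) (p : int -> int -> C).

Lemma inLL_ge0 (l : int) : inLL p l -> 0 <= l.
Proof. by case=> L [_ []]. Qed.

Lemma inLL_p_neq0 (l : int) : inLL p l -> p l 0 != 0.
Proof.
case=> L [pL_neq0 [l_ge0 l_lt]]; rewrite -(gez0_abs l_ge0).
by apply: pL_neq0; lia.
Qed.

Lemma inLL_le (k l : int) : inLL p l -> 0 <= k <= l -> inLL p k.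
Proof. by case=> L [pL_neq0 [_ l_lt]] /andP[k_ge0 k_le]; exists L; split => //; lia. Qed.

Lemma indLL_in (l : int) : inLL p l -> indLL p l = 1.
Proof. by move=> l_in; rewrite /indLL asboolT. Qed.

Lemma indLL_notin (l : int) : ~ inLL p l -> indLL p l = 0.
Proof. by move=> l_out; rewrite /indLL asboolF. Qed.

Lemma rdd_eq0 (l : int) : l < 0 -> rdd q p l = 0.
Proof.
by move=> l_lt0; rewrite /rdd indLL_notin ?mulr0 // => /inLL_ge0; rewrite leNgt l_lt0.
Qed.

Hypothesis hq : forall l : int, l < 0 -> q l = 0.
Hypothesis hp : forall l z : int, z < 0 -> p l z = 0.

Lemma pplus_eq0 (l z : int) : z <= 0 -> pplus p l z = 0.
Proof.
move=> z_le0; rewrite /pplus; have [l_in|l_out] := pselect (inLL p l); last first.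
  by rewrite indLL_notin ?mulr0.
have [->|z_neq0] := eqVneq z 0; first by rewrite divff ?subrr ?mul0r // inLL_p_neq0.
by rewrite hp ?mul0r ?subrr ?mul0r // lt_neqAle z_neq0.
Qed.

Lemma qL_eq0 (l : int) : l < 0 -> qL q p l = 0.
Proof. by move=> l_lt0; rewrite /qL hq ?mul0r. Qed.

Lemma qL_rec (m : nat) :
  qL q p m%:Z = rdd q p m%:Z + \sum_(i < m.+1) pplus p m%:Z i%:Z * qL q p (m%:Z - i%:Z).
Proof.
have [m_in|m_out] := pselect (inLL p m%:Z); last first.
  rewrite /qL /rdd !indLL_notin // !mulr0 add0r big1 // => i _.
  by rewrite /pplus indLL_notin // mulr0 mul0r.
have p0_neq0 := inLL_p_neq0 m_in.
have rr_window : rr q p m%:Z = \sum_(i < m.+1) q (m%:Z - i%:Z) * p m%:Z i%:Z.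
  rewrite /rr (zsum_window _ 0 m.+1); first by apply: eq_bigr => i _; rewrite add0r.
  move=> z z_out; have [z_lt0|z_ge0] := ltP z 0; first by rewrite hp ?mulr0.
  by rewrite hq ?mul0r //; lia.
rewrite /rdd rr_window /qL !indLL_in // !mulr1 mulr_suml -big_split /=.
rewrite (eq_bigr (fun i : 'I_m.+1 => q (m%:Z - i%:Z) * (i%:Z == 0)%:R)) => [|i _].
  by rewrite big_ord_recl subr0 mulr1 big1 ?addr0 // => i _; rewrite mulr0.
rewrite indLL_in; last by apply: (inLL_le _ m_in); have := ltn_ord i; lia.
by rewrite /pplus indLL_in //; field.
Qed.

Lemma qL_id : (forall l : int, ~ inLL p l -> q l = 0) -> qL q p =1 q.
Proof.
move=> q_out l; rewrite /qL; have [l_in|l_out] := pselect (inLL p l).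
  by rewrite indLL_in ?mulr1.
by rewrite indLL_notin ?q_out ?mulr0.
Qed.

End Inversion.

Theorem theorem1 (R : realType) (q : int -> R[i]) (p : int -> int -> R[i])
  (hq : forall l : int, l < 0 -> q l = 0)
  (hp : forall l z : int, z < 0 -> p l z = 0)
  (hL0 : p 0 0 != 0) :
  (forall l : int,
     qL q p l = zsum (fun z => rdd q p (l - z) * beta (pplus p) l z))
  /\ ((forall l : int, ~ inLL p l -> q l = 0) ->
      forall l : int, qL q p l = q l).
Proof.
split=> [l|]; last exact: qL_id.
by apply: beta_conv_unique; [exact: pplus_eq0 | exact: rdd_eq0 | exact: qL_eq0 | exact: qL_rec].
Qed.
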